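(* Let $\mathbf a:\mathbb{R}^d\to\mathbb{R}^n$ be differentiable, let $z_1,\dots,z_n$ be independent real noises with common differentiable cdf $F$, and let $x_i=\mathrm{sign}(a_i(\boldsymbol\phi)-z_i)\in\{-1,1\}$, so that $P(x_i=1)=F(a_i(\boldsymbol\phi))$ independently. Let $\mathcal L:\mathbb{R}^n\to\mathbb{R}$ be multilinear, i.e., affine in each coordinate $x_i$ when the other coordinates are fixed. Define the straight-through estimator $$\hat{\mathbf g}(\mathbf x)=\sum_{i=1}^n 2F'(a_i(\boldsymbol\phi))\,\nabla_{\boldsymbol\phi}a_i(\boldsymbol\phi)\,\frac{\partial\mathcal L(\mathbf x)}{\partial x_i}.$$ Then $\hat{\mathbf g}$ is unbiased: $\mathbb{E}_{\mathbf x}[\hat{\mathbf g}(\mathbf x)]=\nabla_{\boldsymbol\phi}\mathbb{E}_{\mathbf x}[\mathcal L(\mathbf x)]$. *)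

From HB Require Import structures.
From mathcomp Require Import all_boot all_order all_algebra.
From mathcomp Require Import all_classical all_reals all_analysis.
Set Implicit Arguments. Unset Strict Implicit. Unset Printing Implicit Defensive.
Import Order.TTheory GRing.Theory Num.Theory.
Import numFieldNormedType.Exports.
Local Open Scope ring_scope.
Local Open Scope classical_set_scope.

Definition is_cdf (R : realType) (F : R -> R) : Prop :=
  [/\ {homo F : x y / x <= y},
      F x @[x --> -oo] --> (0 : R),
      F x @[x --> +oo] --> (1 : R) &
      forall x : R, F @ at_right x --> F x].

Definition multilinear (R : realType) (n : nat) (L : 'rV[R]_n -> R) : Prop :=
  forall (i : 'I_n) (x : 'rV[R]_n), exists alpha beta : R,
    forall t : R, L (\row_k (if k == i then t else x ord0 k)) = alpha * t + beta.

Definition sgn_vec (R : realType) (n : nat) (b : {ffun 'I_n -> bool}) : 'rV[R]_n :=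
  \row_i (if b i then 1 else -1).

Definition bern_weight (R : realType) (n : nat) (p : 'I_n -> R)
    (b : {ffun 'I_n -> bool}) : R :=
  \prod_(i < n) (if b i then p i else 1 - p i).

(* E_x[G(x)] for x_i in {-1,1} independent with P(x_i = 1) = p i. *)
Definition expect (R : realType) (n : nat) (p : 'I_n -> R) (G : 'rV[R]_n -> R) : R :=
  \sum_(b : {ffun 'I_n -> bool}) @bern_weight R n p b * G (@sgn_vec R n b).

(* P(x_i = 1) = F (a_i phi) where x_i = sign(a_i(phi) - z_i), z_i ~ F. *)
Definition prob_one (R : realType) (d n : nat) (a : 'rV[R]_d -> 'rV[R]_n)
    (F : R -> R) (phi : 'rV[R]_d) : 'I_n -> R :=
  fun i => F (a phi ord0 i).

Definition ste (R : realType) (d n : nat) (a : 'rV[R]_d -> 'rV[R]_n) (F : R -> R)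
    (L : 'rV[R]_n -> R) (phi : 'rV[R]_d) (j : 'I_d) (x : 'rV[R]_n) : R :=
  \sum_(i < n) 2 * derive1 F (a phi ord0 i)
      * 'D_(delta_mx ord0 j) (fun psi => a psi ord0 i) phi
      * 'D_(delta_mx ord0 i) L x.

From HB Require Import structures.
From mathcomp Require Import all_boot all_order all_algebra.
From mathcomp Require Import all_classical all_reals all_analysis.
From mathcomp Require Import ring.
Set Implicit Arguments.
Unset Strict Implicit.
Unset Printing Implicit Defensive.
Import Order.TTheory GRing.Theory Num.Theory.
Import numFieldNormedType.Exports.
Local Open Scope ring_scope.

(* Write E[L] = sum_b (prod_i w_i(b)) L(x_b), where w_i(b) is p_i or 1 - p_i
   according to the sign of x_i.  By the Leibniz rule its derivative is
   sum_i p_i' D_i, where D_i = sum_b s_i(b) (prod_(k != i) w_k(b)) L(x_b) and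
   s_i(b) = x_i is the sign.  Pair every outcome b with the outcome obtained
   by flipping x_i: since L is affine in x_i with slope dL/dx_i, both D_i and
   E[2 dL/dx_i] collapse to sum_b (prod_(k != i) w_k(b)) dL/dx_i(x_b). *)

Definition row_upd (T : Type) (n : nat) (x : 'rV[T]_n) (i : 'I_n) (t : T) :
    'rV[T]_n :=
  \row_k (if k == i then t else x ord0 k).

Lemma row_upd_id (T : Type) (n : nat) (x : 'rV[T]_n) (i : 'I_n) :
  row_upd x i (x ord0 i) = x.
Proof. by apply/rowP => k; rewrite mxE; case: eqP => [->|]. Qed.

Lemma sum_involution (T : finType) (R : numDomainType) (f : T -> T)
    (G H : T -> R) :
  involutive f -> (forall t, G t + G (f t) = H t + H (f t)) ->
  \sum_t G t = \sum_t H t.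
Proof.
move=> fK GH; have sum_f K : \sum_t K (f t) = \sum_t K t :> R.
  by rewrite [RHS](reindex_inj (can_inj fK)).
apply: (@mulIf _ 2); first by rewrite pnatr_eq0.
rewrite !mulr_natr !mulr2n -{2}sum_f -{2}(sum_f H) -!big_split /=.
exact: eq_bigr.
Qed.

Section DirectionalDerivatives.
Variables (R : numFieldType) (V : normedModType R).

Lemma is_derive_bigsum (W : normedModType R) (I : Type) (s : seq I)
    (P : pred I) (h : I -> V -> W) (dh : I -> W) (x v : V) :
  (forall i, P i -> is_derive x v (h i) (dh i)) ->
  is_derive x v (fun y => \sum_(i <- s | P i) h i y) (\sum_(i <- s | P i) dh i).
Proof.
move=> dh_; rewrite -fct_sumE.
by elim/big_ind2: _ => // *; [exact: is_derive_cst | exact: is_deriveD].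
Qed.

Lemma is_derive_bigprod (I : eqType) (s : seq I) (h : I -> V -> R)
    (dh : I -> R) (x v : V) :
  uniq s -> (forall i, is_derive x v (h i) (dh i)) ->
  is_derive x v (fun y => \prod_(i <- s) h i y)
    (\sum_(i <- s) dh i * \prod_(k <- s | k != i) h k x).
Proof.
move=> + dh_; elim: s => [_|c s IH /= /andP[cNs /IH {}IH]].
  by rewrite big_nil -fct_prodE big_nil; exact: is_derive_cst.
rewrite -fct_prodE big_cons fct_prodE.
apply: is_derive_eq (is_deriveM (dh_ c) IH) _.
rewrite big_cons big_cons eqxx /= addrC mulrC; congr (_ + _).
  congr (_ * _); rewrite big_seq [RHS]big_seq_cond; apply: eq_bigl => k.
  case: (boolP (k \in s)) => //= ks.
  by apply/esym/eqP => kc; rewrite -kc ks in cNs.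
rewrite [_ *: _]big_distrr /=; apply: eq_big_seq => i si.
rewrite big_cons ifT; first by rewrite mulrCA.
by apply: contraNneq cNs => ->.
Qed.

Lemma is_derive_comp1 (f : V -> R) (g : R -> R) (x v : V) :
  differentiable f x -> derivable g (f x) 1 ->
  is_derive x v (g \o f) (derive1 g (f x) * 'D_v f x).
Proof.
move=> df /derivable1_diffP dg.
have dgf : differentiable (g \o f) x by exact: differentiable_comp.
apply: DeriveDef; first exact: diff_derivable.
rewrite (deriveE _ dgf) diff_comp // (deriveE _ df) derive1E' //= mulrC.
by rewrite -[X in 'd  _ _ X = _]mulr1 [LHS]linearZ.
Qed.

Lemma derive_line (W : normedModType R) (f : V -> W) (x v : V) :
  'D_v f x = 'D_1 (fun h : R => f (h *: v + x)) 0.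
Proof.
rewrite /derive; set g1 := fun h => h^-1 *: _; set g2 := fun h => h^-1 *: _.
suff -> : g1 = g2 by [].
by apply/funext => h; rewrite /g1 /g2 /= addr0 scale0r add0r [_%:A]mulr1.
Qed.

End DirectionalDerivatives.

Lemma derive_row_affine (R : numFieldType) (n : nat) (f : 'rV[R]_n -> R)
    (x : 'rV[R]_n) (i : 'I_n) (alpha beta : R) :
  (forall t, f (row_upd x i t) = alpha * t + beta) ->
  'D_(delta_mx ord0 i) f x = alpha.
Proof.
move=> f_aff; rewrite derive_line.
have -> : (fun h => f (h *: delta_mx ord0 i + x)) = alpha *: id + cst (f x).
  apply/funext => h; rewrite -[in RHS](row_upd_id x i) !f_aff /=.
  have -> : h *: delta_mx ord0 i + x = row_upd x i (h + x ord0 i).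
    apply/rowP => k; rewrite !mxE eqxx /=.
    by case: eqP => [->|]; rewrite ?mulr1 ?mulr0 ?add0r // addrC.
  by rewrite f_aff !fctE mulrDr -addrA.
have := is_deriveD (is_deriveZ alpha (is_derive_id (0 : R) 1))
  (is_derive_cst (f x) (0 : R) 1).
by move=> dl; rewrite derive_val addr0 [_ *: _]mulr1.
Qed.

Section BernoulliExpectation.
Variables (R : realType) (n : nat).
Local Notation outcome := {ffun 'I_n -> bool}.

Definition bern_factor (p : 'I_n -> R) (i : 'I_n) (b : outcome) : R :=
  if b i then p i else 1 - p i.

Definition toggle (i : 'I_n) (b : outcome) : outcome :=
  [ffun k => if k == i then ~~ b k else b k].

Lemma toggleK (i : 'I_n) : involutive (toggle i).
Proof.
move=> b; apply/ffunP => k; rewrite !ffunE.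
by case: eqP => // ->; rewrite negbK.
Qed.

Lemma toggle_neq (i k : 'I_n) (b : outcome) : k != i -> toggle i b k = b k.
Proof. by rewrite ffunE => /negbTE ->. Qed.

Lemma sgn_vec_toggle (i : 'I_n) (b : outcome) :
  sgn_vec R (toggle i b) = row_upd (sgn_vec R b) i (- sgn_vec R b ord0 i).
Proof.
apply/rowP => k; rewrite !mxE ffunE.
by case: eqP => [->|]; rewrite ?mxE //; case: (b i); rewrite ?opprK.
Qed.

Lemma row_upd_sgn_vec_toggle (i : 'I_n) (b : outcome) (t : R) :
  row_upd (sgn_vec R (toggle i b)) i t = row_upd (sgn_vec R b) i t.
Proof.
apply/rowP => k; rewrite !mxE.
by case: eqP => // /eqP ki; rewrite toggle_neq.
Qed.

Lemma bern_factor_toggle (p : 'I_n -> R) (i : 'I_n) (b : outcome) :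
  bern_factor p i (toggle i b) + bern_factor p i b = 1.
Proof.
rewrite /bern_factor ffunE eqxx.
by case: (b i); rewrite /= ?subrK // addrC subrK.
Qed.

Lemma prod_bern_factor_toggle (p : 'I_n -> R) (i : 'I_n) (b : outcome) :
  \prod_(k | k != i) bern_factor p k (toggle i b) =
  \prod_(k | k != i) bern_factor p k b.
Proof. by apply: eq_bigr => k ki; rewrite /bern_factor toggle_neq. Qed.

Lemma bern_weightE (p : 'I_n -> R) (i : 'I_n) (b : outcome) :
  bern_weight p b = bern_factor p i b * \prod_(k | k != i) bern_factor p k b.
Proof. by rewrite /bern_weight (bigD1 i). Qed.

Definition dexpect (p : 'I_n -> R) (i : 'I_n) (G : 'rV[R]_n -> R) : R :=
  \sum_(b : outcome)
    sgn_vec R b ord0 i * \prod_(k | k != i) bern_factor p k b * G (sgn_vec R b).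

Lemma is_derive_expect (V : normedModType R) (p : V -> 'I_n -> R)
    (dp : 'I_n -> R) (G : 'rV[R]_n -> R) (x v : V) :
  (forall i, is_derive x v (p ^~ i) (dp i)) ->
  is_derive x v (fun y => expect (p y) G) (\sum_i dp i * dexpect (p x) i G).
Proof.
move=> dp_.
have dfactor i b : is_derive x v (fun y => bern_factor (p y) i b)
    (sgn_vec R b ord0 i * dp i).
  rewrite /bern_factor mxE; case: (b i); first by rewrite mul1r.
  have -> : (fun y => 1 - p y i) = cst 1 - p ^~ i.
    by apply/funext => y; rewrite !fctE.
  rewrite mulN1r -[- dp i]sub0r.
  exact: is_deriveB (is_derive_cst (1 : R) x v) (dp_ i).
have dweight b := is_derive_bigprod (index_enum_uniq _) (dfactor ^~ b).
have dterm b : is_derive x v (fun y => bern_weight (p y) b * G (sgn_vec R b))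
    (G (sgn_vec R b) * \sum_i sgn_vec R b ord0 i * dp i *
                           \prod_(k | k != i) bern_factor (p x) k b).
  have := is_deriveM (dweight b) (is_derive_cst (G (sgn_vec R b)) x v).
  by rewrite scaler0 add0r.
apply: is_derive_eq (is_derive_bigsum _ (fun b _ => dterm b)) _.
under eq_bigr do rewrite big_distrr.
rewrite exchange_big; apply: eq_bigr => i _; rewrite big_distrr.
by apply: eq_bigr => b _ /=; ring.
Qed.

Lemma dexpect_multilinear (p : 'I_n -> R) (i : 'I_n) (L : 'rV[R]_n -> R) :
  multilinear L ->
  dexpect p i L = expect p (fun x => 2 * 'D_(delta_mx ord0 i) L x).
Proof.
move=> L_ml; apply: (sum_involution (toggleK i)) => b.
set s := sgn_vec R b ord0 i.
have [alpha [beta L_aff]] := L_ml i (sgn_vec R b).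
have L_row t : L (row_upd (sgn_vec R b) i t) = alpha * t + beta := L_aff t.
have L_row' t : L (row_upd (sgn_vec R (toggle i b)) i t) = alpha * t + beta.
  by rewrite row_upd_sgn_vec_toggle.
have s_toggle : sgn_vec R (toggle i b) ord0 i = - s.
  by rewrite sgn_vec_toggle /row_upd mxE eqxx.
have L_b : L (sgn_vec R b) = alpha * s + beta by rewrite -L_row row_upd_id.
have L_toggle : L (sgn_vec R (toggle i b)) = alpha * - s + beta.
  by rewrite sgn_vec_toggle L_row.
rewrite (derive_row_affine L_row) (derive_row_affine L_row').
rewrite s_toggle L_b L_toggle !(bern_weightE p i) prod_bern_factor_toggle.
set Q := \prod_(k | k != i) _.
have s2 : s * s = 1 by rewrite /s mxE; case: (b i); rewrite ?mulrNN mulr1.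
transitivity (2 * alpha * Q * (s * s)); first by ring.
by rewrite s2 -(bern_factor_toggle p i b); ring.
Qed.

Lemma expect_sum (I : finType) (p : 'I_n -> R) (c : I -> R)
    (G : I -> 'rV[R]_n -> R) :
  expect p (fun x => \sum_i c i * G i x) = \sum_i c i * expect p (G i).
Proof.
rewrite /expect; under eq_bigr do rewrite big_distrr.
rewrite exchange_big; apply: eq_bigr => i _; rewrite big_distrr.
by apply: eq_bigr => b _ /=; rewrite mulrCA.
Qed.

End BernoulliExpectation.

Theorem propositionB2 (R : realType) (d n : nat) (a : 'rV[R]_d -> 'rV[R]_n)
    (F : R -> R) (L : 'rV[R]_n -> R) (phi : 'rV[R]_d) :
  (forall psi : 'rV[R]_d, differentiable a psi) ->
  is_cdf F ->
  (forall t : R, derivable F t 1) ->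
  multilinear L ->
  forall j : 'I_d,
    derivable (fun psi => expect (prob_one a F psi) L) phi (delta_mx ord0 j) /\
    'D_(delta_mx ord0 j) (fun psi => expect (prob_one a F psi) L) phi
      = expect (prob_one a F phi) (ste a F L phi j).
Proof.
move=> a_diff _ F_deriv L_ml j; set v := delta_mx ord0 j.
pose dp i := derive1 F (a phi ord0 i) * 'D_v (fun psi => a psi ord0 i) phi.
have dprob i : is_derive phi v (fun psi => prob_one a F psi i) (dp i).
  apply: (@is_derive_comp1 _ _ (fun psi => a psi ord0 i)) (F_deriv _).
  exact: differentiable_comp (a_diff phi) (differentiable_coord _ _ _).
have dE := is_derive_expect L dprob.
split; first by case: dE.
rewrite derive_val.
transitivity (expect (prob_one a F phi)
    (fun x => \sum_i dp i * (2 * 'D_(delta_mx ord0 i) L x))).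
  by rewrite expect_sum; apply: eq_bigr => i _; rewrite dexpect_multilinear.
by congr expect; apply/funext => x; apply: eq_bigr => i _; rewrite /dp; ring.
Qed.
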